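(* Let $\Lambda$ be a row-finite $k$-graph with no sources, and let $\{t_\lambda\}_{\lambda\in\Lambda}$ and $\{\tilde t_\lambda\}_{\lambda\in\Lambda}$ be purely atomic representations of $C^*(\Lambda)$ on Hilbert spaces $\mathcal H$ and $\mathcal H'$, with associated projection valued measures $P$ and $\tilde P$. Suppose $U:\mathcal H\to\mathcal H'$ is a bounded operator with $\tilde t_\lambda U=Ut_\lambda$ and $\tilde t_\lambda^*U=Ut_\lambda^*$ for all $\lambda\in\Lambda$. Then $\tilde P(\{\omega\})U=UP(\{\omega\})$ for every $\omega\in\Lambda^\infty$. Moreover, if $U$ is unitary, then the supports $\{\omega:P(\{\omega\})\neq0\}$ and $\{\omega:\tilde P(\{\omega\})\neq0\}$ coincide.
   Context: A $k$-graph ($k\ge1$) is a countable small category $\Lambda$ with a functor $d:\Lambda\to\mathbb N^k$ satisfying unique factorization: if $d(\lambda)=m+n$ there are unique $\mu,\nu$ with $\lambda=\mu\nu$, $d(\mu)=m$, $d(\nu)=n$. $\Lambda^0$ = vertices, $r,s$ = range, source, $v\Lambda^n=\{\lambda:d(\lambda)=n,r(\lambda)=v\}$; row-finite: each $v\Lambda^n$ finite; no sources: each $v\Lambda^n$ nonempty. Infinite paths are degree-preserving functors $x:\Omega_k\to\Lambda$, where $\Omega_k$ has objects $\mathbb N^k$, morphisms $(p,q)$ with $p\le q$ and $d(p,q)=q-p$; $\Lambda^\infty$ is the set of them. Cylinder sets $Z(\lambda)=\{x:x(0,d(\lambda))=\lambda\}$ generate the Borel $\sigma$-algebra. A representation of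 $C^*(\Lambda)$ is a family of partial isometries $\{t_\lambda\}$ satisfying (CK1) $\{t_v\}_{v\in\Lambda^0}$ mutually orthogonal projections, (CK2) $t_\lambda t_\eta=t_{\lambda\eta}$ when $s(\lambda)=r(\eta)$, (CK3) $t_\lambda^*t_\lambda=t_{s(\lambda)}$, (CK4) $t_v=\sum_{\lambda\in v\Lambda^n}t_\lambda t_\lambda^*$. Its projection valued measure $P$ on Borel sets of $\Lambda^\infty$ satisfies $P(Z(\lambda))=t_\lambda t_\lambda^*$. Purely atomic: there is a Borel $\Omega$ with $P(\Lambda^\infty\setminus\Omega)=0$, $P(\{\omega\})\ne0$ for $\omega\in\Omega$, $\sum_{\omega\in\Omega}P(\{\omega\})=\mathrm{Id}$ strongly. *)

From HB Require Import structures.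
From mathcomp Require Import all_boot all_order all_algebra.
From mathcomp Require Import complex.
From mathcomp Require Import all_classical all_reals.
From mathcomp Require Import measurable_structure.

Set Implicit Arguments.
Unset Strict Implicit.
Unset Printing Implicit Defensive.

Import Order.TTheory GRing.Theory Num.Theory.
Local Open Scope classical_set_scope.
Local Open Scope ring_scope.

Definition Nk (k : nat) := {ffun 'I_k -> nat}.
Definition zeroNk k : Nk k := [ffun => 0%N].
Definition addNk k (m n : Nk k) : Nk k := [ffun i => (m i + n i)%N].
Definition subNk k (m n : Nk k) : Nk k := [ffun i => (m i - n i)%N].
Definition leNk k (m n : Nk k) : bool := [forall i, (m i <= n i)%N].

(** Objects = vertices (type [kvert]), morphisms = paths (type [kpath]);
      composition [kcomp l m] is "l m" (l after m), meaningful when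
      [ks l = kr m]. *)

Record kgraph (k : nat) := KGraph {
  kvert : countType;
  kpath :> countType;
  kr : kpath -> kvert;
  ks : kpath -> kvert;
  kid : kvert -> kpath;
  kcomp : kpath -> kpath -> kpath;
  kdeg : kpath -> Nk k;
  kr_id : forall v, kr (kid v) = v;
  ks_id : forall v, ks (kid v) = v;
  kr_comp : forall l m, ks l = kr m -> kr (kcomp l m) = kr l;
  ks_comp : forall l m, ks l = kr m -> ks (kcomp l m) = ks m;
  kcomp_idl : forall l, kcomp (kid (kr l)) l = l;
  kcomp_idr : forall l, kcomp l (kid (ks l)) = l;
  kcompA : forall l m n, ks l = kr m -> ks m = kr n ->
      kcomp l (kcomp m n) = kcomp (kcomp l m) n;
  kdeg_id : forall v, kdeg (kid v) = zeroNk k;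
  kdeg_comp : forall l m, ks l = kr m ->
      kdeg (kcomp l m) = addNk (kdeg l) (kdeg m);
  kfactor : forall l (m n : Nk k), kdeg l = addNk m n ->
      exists mu nu, [/\ ks mu = kr nu, l = kcomp mu nu,
                        kdeg mu = m & kdeg nu = n];
  kfactor_uniq : forall mu nu mu' nu',
      ks mu = kr nu -> ks mu' = kr nu' ->
      kcomp mu nu = kcomp mu' nu' -> kdeg mu = kdeg mu' -> kdeg nu = kdeg nu' ->
      mu = mu' /\ nu = nu'
}.

Arguments kr {k L} : rename.
Arguments ks {k L} : rename.
Arguments kid {k L} : rename.
Arguments kcomp {k L} : rename.
Arguments kdeg {k L} : rename.

Definition vLn k (L : kgraph k) (v : kvert L) (n : Nk k) : set L :=
  [set l : L | kr l = v /\ kdeg l = n].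

Definition row_finite k (L : kgraph k) :=
  forall (v : kvert L) (n : Nk k), finite_set (vLn v n).
Definition no_sources k (L : kgraph k) :=
  forall (v : kvert L) (n : Nk k), vLn v n !=set0.

(** * Infinite paths: degree-preserving functors Omega_k -> Lambda.
      A morphism (p,q) of Omega_k (p <= q) is sent to [ipf p q].
      The values of [ipf p q] for p not <= q carry no meaning; they are
      normalized to [ipf p p] so that equality of infinite paths is
      equality of functors. *)

Record infpath k (L : kgraph k) := InfPath {
  ipf : Nk k -> Nk k -> L;
  ip_deg : forall p q, leNk p q -> kdeg (ipf p q) = subNk q p;
  ip_id : forall p, ipf p p = kid (kr (ipf p p));
  ip_comp : forall p q r, leNk p q -> leNk q r ->
      ks (ipf p q) = kr (ipf q r) /\ kcomp (ipf p q) (ipf q r) = ipf p r;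
  ip_junk : forall p q, ~~ leNk p q -> ipf p q = ipf p p
}.

HB.instance Definition _ k (L : kgraph k) := gen_eqMixin (infpath L).
HB.instance Definition _ k (L : kgraph k) := gen_choiceMixin (infpath L).

Definition cyl k (L : kgraph k) (l : L) : set (infpath L) :=
  [set x | ipf x (zeroNk k) (kdeg l) = l].

Definition borel_inf k (L : kgraph k) : set (set (infpath L)) :=
  smallest (sigma_algebra setT) (range (@cyl k L)).

Section HilbertDefs.
Variable R : realType.
Variable V : lmodType R[i].
Variable ip : V -> V -> R[i].

(* squared norm is ip x x *)
Definition hcvg (u : nat -> V) (l : V) :=
  forall eps : R[i], 0 < eps ->
    exists N, forall n, (N <= n)%N -> ip (u n - l) (u n - l) < eps.

Definition hcauchy (u : nat -> V) :=
  forall eps : R[i], 0 < eps ->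
    exists N, forall m n, (N <= m)%N -> (N <= n)%N ->
      ip (u m - u n) (u m - u n) < eps.
End HilbertDefs.

Record hilbert (R : realType) := Hilbert {
  hsp :> lmodType R[i];
  hinner : hsp -> hsp -> R[i];
  hinner_linl : forall (a : R[i]) x y z,
      hinner (a *: x + y) z = a * hinner x z + hinner y z;
  hinner_conj : forall x y, hinner y x = (hinner x y)^*;
  hinner_ge0 : forall x, 0 <= hinner x x;
  hinner_eq0 : forall x, hinner x x = 0 -> x = 0;
  hcomplete : forall u : nat -> hsp, hcauchy hinner u ->
      exists l, hcvg hinner u l
}.

Arguments hinner {R h}.

Section Operators.
Variable R : realType.

Definition linear_op (H H' : hilbert R) (T : H -> H') :=
  forall (a : R[i]) x y, T (a *: x + y) = a *: T x + T y.

Definition bounded_op (H H' : hilbert R) (T : H -> H') :=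
  linear_op T /\
  exists M : R[i], forall x, hinner (T x) (T x) <= M * hinner x x.

Definition is_adjoint (H H' : hilbert R) (T : H -> H') (S : H' -> H) :=
  forall x y, hinner (T x) y = hinner x (S y).

Definition projection (H : hilbert R) (T : H -> H) :=
  bounded_op T /\ T \o T = T /\ is_adjoint T T.

Definition zero_op (H H' : hilbert R) : H -> H' := fun _ => 0.
Arguments zero_op : clear implicits.

Definition unitary (H H' : hilbert R) (U : H -> H') :=
  bounded_op U /\ (forall x y, hinner (U x) (U y) = hinner x y) /\
  (forall y, exists x, U x = y).

Definition nonzero_op (H H' : hilbert R) (T : H -> H') :=
  T <> zero_op H H'.
End Operators.
Arguments zero_op {R} H H'.

(** * Representations of C^*(Lambda): Cuntz-Krieger Lambda-families of
      partial isometries [t l] on H, with adjoints [ts l] = (t l)^*. *)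

Definition CK_family (R : realType) k (L : kgraph k) (H : hilbert R)
    (t ts : L -> H -> H) :=
  [/\ (forall l, bounded_op (t l) /\ is_adjoint (t l) (ts l) /\
                 t l \o ts l \o t l = t l),
      (forall v, projection (t (kid v))) /\
      (forall v w, v <> w -> t (kid v) \o t (kid w) = zero_op H H),
      (forall l m, ks l = kr m -> t (kcomp l m) = t l \o t m),
      (forall l, ts l \o t l = t (kid (ks l))) &
      (forall v n h, t (kid v) h = \sum_(l \in vLn v n) t l (ts l h))].

Definition pvm (R : realType) k (L : kgraph k) (H : hilbert R)
    (P : set (infpath L) -> H -> H) :=
  [/\ (forall A, borel_inf A -> projection (P A)),
      P set0 = zero_op H H,
      P setT = id,
      (forall A B, borel_inf A -> borel_inf B -> P (A `&` B) = P A \o P B) &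
      (forall A : nat -> set (infpath L),
          (forall n, borel_inf (A n)) -> trivIset setT A ->
          forall h, hcvg hinner (fun n => \sum_(i < n) P (A i) h)
                                (P (\bigcup_i A i) h))].

Definition pvm_of_rep (R : realType) k (L : kgraph k) (H : hilbert R)
    (t ts : L -> H -> H) (P : set (infpath L) -> H -> H) :=
  pvm P /\ forall l, P (cyl l) = t l \o ts l.

(** sum_{w in Om} P({w}) = Id in the strong operator topology
    (unordered sum: convergence of the net of finite partial sums) *)
Definition strong_sum_id (R : realType) k (L : kgraph k) (H : hilbert R)
    (P : set (infpath L) -> H -> H) (Om : set (infpath L)) :=
  forall (h : H) (eps : R[i]), 0 < eps ->
    exists F0, [/\ finite_set F0, F0 `<=` Om &
      forall F, finite_set F -> F0 `<=` F -> F `<=` Om ->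
        hinner (h - \sum_(w \in F) P [set w] h)
               (h - \sum_(w \in F) P [set w] h) < eps].

Definition purely_atomic (R : realType) k (L : kgraph k) (H : hilbert R)
    (P : set (infpath L) -> H -> H) :=
  exists Om : set (infpath L),
    [/\ borel_inf Om,
        P (~` Om) = zero_op H H,
        (forall w, Om w -> nonzero_op (P [set w])) &
        strong_sum_id P Om].

From HB Require Import structures.
From mathcomp Require Import all_boot all_order all_algebra.
From mathcomp Require Import complex.
From mathcomp Require Import all_classical all_reals.
From mathcomp Require Import measurable_structure.
From mathcomp Require Import ring.

(* The Borel sets A with P'(A) U = U P(A) form a Dynkin system (P and P' are
   complemented and countably additive, and U is continuous). It contains every
   finite intersection of cylinder sets, because P(Z(l)) = t_l t_l^* and U
   intertwines both t_l and t_l^*. These intersections form a pi-system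
   generating the Borel sets, so by Dynkin's pi-lambda theorem U intertwines P
   and P' on every Borel set, in particular on the singletons
   {w} = \bigcap_n Z(w(0, (n,...,n))). When U is unitary it is injective and
   surjective, so P({w}) = 0 iff P'({w}) = 0. *)

Set Implicit Arguments.
Unset Strict Implicit.
Unset Printing Implicit Defensive.

Import Order.TTheory GRing.Theory Num.Theory.
Local Open Scope classical_set_scope.
Local Open Scope ring_scope.

Section HilbertSpace.
Variables (R : realType) (H : hilbert R).
Implicit Types x y z : H.

Lemma hinnerDl x y z : hinner (x + y) z = hinner x z + hinner y z.
Proof. by rewrite -[x in LHS]scale1r hinner_linl mul1r. Qed.

Lemma hinner0l z : hinner 0 z = 0.
Proof. by apply: (addrI (hinner 0 z)); rewrite -hinnerDl !addr0. Qed.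

Lemma hinnerNl x z : hinner (- x) z = - hinner x z.
Proof. by have := hinner_linl (-1) x 0 z; rewrite scaleN1r addr0 hinner0l addr0 mulN1r. Qed.

Lemma hinnerDr x y z : hinner z (x + y) = hinner z x + hinner z y.
Proof.
rewrite [LHS]hinner_conj hinnerDl rmorphD.
by rewrite [hinner z x]hinner_conj [hinner z y]hinner_conj.
Qed.

Lemma hinnerNr x z : hinner z (- x) = - hinner z x.
Proof. by rewrite [LHS]hinner_conj hinnerNl rmorphN [hinner z x]hinner_conj. Qed.

Lemma hinner_parallelogram x y :
  hinner (x - y) (x - y) + hinner (x + y) (x + y) =
  2 * hinner x x + 2 * hinner y y.
Proof. by rewrite !(hinnerDl, hinnerDr, hinnerNl, hinnerNr) !opprK; ring. Qed.

Lemma hcvg_unique (u : nat -> H) a b :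
  hcvg hinner u a -> hcvg hinner u b -> a = b.
Proof.
move=> ua ub; apply/eqP; rewrite -subr_eq0; apply/eqP/hinner_eq0.
set d := hinner (a - b) (a - b).
apply/eqP; apply: contraT => d_neq0.
have d_gt0 : 0 < d by rewrite lt_def d_neq0 hinner_ge0.
have [Na una] := ua (d / 4) (divr_gt0 d_gt0 (ltr0n _ 4)).
have [Nb unb] := ub (d / 4) (divr_gt0 d_gt0 (ltr0n _ 4)).
pose n := maxn Na Nb.
have d_le : d <= 2 * hinner (u n - b) (u n - b) + 2 * hinner (u n - a) (u n - a).
  have diff : u n - b - (u n - a) = a - b by rewrite opprB addrC addrA subrK.
  by rewrite -hinner_parallelogram diff lerDl hinner_ge0.
have d_split : d = 2 * (d / 4) + 2 * (d / 4) by field.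
have lt_d : 2 * hinner (u n - b) (u n - b) + 2 * hinner (u n - a) (u n - a) < d.
  by rewrite [X in _ < X]d_split ltrD // ltr_pM2l // (una, unb) // (leq_maxl, leq_maxr).
by have := lt_le_trans lt_d d_le; rewrite ltxx.
Qed.

Lemma hcvg_eventually_cst (u : nat -> H) a N :
  (forall n, (N <= n)%N -> u n = a) -> hcvg hinner u a.
Proof. by move=> ua e e_gt0; exists N => n /ua ->; rewrite subrr hinner0l. Qed.

End HilbertSpace.

Section LinearOperator.
Variables (R : realType) (H H' : hilbert R) (U : H -> H').

Section Linear.
Hypothesis U_lin : linear_op U.

Lemma linear_op0 : U 0 = 0.
Proof.
have := U_lin 1 0 0; rewrite !scale1r addr0 => U00.
by apply: (addrI (U 0)); rewrite -U00 addr0.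
Qed.

Lemma linear_opD x y : U (x + y) = U x + U y.
Proof. by rewrite -[x in LHS]scale1r U_lin scale1r. Qed.

Lemma linear_opN x : U (- x) = - U x.
Proof. by have := U_lin (-1) x 0; rewrite !scaleN1r !addr0 linear_op0 addr0. Qed.

Lemma linear_opB x y : U (x - y) = U x - U y.
Proof. by rewrite linear_opD linear_opN. Qed.

Lemma linear_op_sum (I : Type) (r : seq I) (P : pred I) (F : I -> H) :
  U (\sum_(i <- r | P i) F i) = \sum_(i <- r | P i) U (F i).
Proof. exact: (big_morph U linear_opD linear_op0). Qed.

End Linear.

Lemma bounded_op_hcvg (u : nat -> H) l :
  bounded_op U -> hcvg hinner u l -> hcvg hinner (U \o u) (U l).
Proof.
move=> [U_lin [M U_le]] ul e e_gt0.
have c_gt0 : 0 < `|M| + 1 by rewrite ltr_wpDl.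
have [N ulN] := ul (e / (`|M| + 1)) (divr_gt0 e_gt0 c_gt0).
exists N => n /ulN d_lt /=; rewrite -linear_opB //.
set d := u n - l in d_lt *.
have Md_ge0 : 0 <= M * hinner d d := le_trans (hinner_ge0 _) (U_le d).
apply: (le_lt_trans (U_le d)); apply: (le_lt_trans (y := (`|M| + 1) * hinner d d)).
  rewrite -(ger0_norm Md_ge0) normrM (ger0_norm (hinner_ge0 d)).
  by rewrite ler_wpM2r ?hinner_ge0 ?lerDl.
by rewrite mulrC -ltr_pdivlMr.
Qed.

End LinearOperator.

Section GeneratedSigmaAlgebra.
Variables (T : Type) (G : set (set T)).

Lemma g_sigma_algebra_setC A : <<s G >> A -> <<s G >> (~` A).
Proof. by rewrite -setTD; exact: sigma_algebraCD. Qed.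

Lemma g_sigma_algebra_setT : <<s G >> setT.
Proof. by have := g_sigma_algebra_setC (@sigma_algebra0 _ setT G); rewrite setC0. Qed.

Lemma g_sigma_algebra_bigcap (F : nat -> set T) :
  (forall n, <<s G >> (F n)) -> <<s G >> (\bigcap_n F n).
Proof.
move=> GF; rewrite -[X in <<s G >> X]setCK setC_bigcap.
apply: g_sigma_algebra_setC; apply: (@sigma_algebra_bigcup _ setT G) => n.
exact: g_sigma_algebra_setC.
Qed.

Lemma g_sigma_algebra_setI : setI_closed <<s G >>.
Proof.
move=> A B GA GB; rewrite -bigcap2E; apply: g_sigma_algebra_bigcap.
by move=> [|[|n]] //=; exact: g_sigma_algebra_setT.
Qed.

Lemma g_sigma_algebra_sub_dynkin (D : set (set T)) :
  setI_closed G -> dynkin D -> G `<=` D -> <<s G >> `<=` D.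
Proof.
by move=> GI dD GD; rewrite -setI_closed_g_dynkin_g_sigma_algebra //; exact: smallest_sub.
Qed.

End GeneratedSigmaAlgebra.

Section InfinitePaths.
Variables (k : nat) (L : kgraph k).
Implicit Types (x w : infpath L) (m p q : Nk k).

Definition diagNk (n : nat) : Nk k := [ffun => n].

Lemma le0Nk m : leNk (zeroNk k) m.
Proof. by apply/forallP => i; rewrite ffunE. Qed.

Lemma leNkxx m : leNk m m.
Proof. exact/forallP. Qed.

Lemma leNk_diag_bigmax m : leNk m (diagNk (\max_i m i)).
Proof. by apply/forallP => i; rewrite ffunE; exact: leq_bigmax. Qed.

Lemma subNk0 m : subNk m (zeroNk k) = m.
Proof. by apply/ffunP => i; rewrite !ffunE subn0. Qed.

Lemma kdeg_ipf0 x m : kdeg (ipf x (zeroNk k) m) = m.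
Proof. by rewrite ip_deg ?le0Nk ?subNk0. Qed.

Lemma infpath_ext x w : (forall p q, ipf x p q = ipf w p q) -> x = w.
Proof.
case: x w => [f ? ? ? ?] [g ? ? ? ?] /= fg.
have f_eq_g : f = g by apply/funext => p; apply/funext => q; exact: fg.
by subst g; congr InfPath; exact: Prop_irrelevance.
Qed.

Lemma ipf_prefix_eq x w p q : leNk p q ->
  ipf x (zeroNk k) q = ipf w (zeroNk k) q ->
  ipf x (zeroNk k) p = ipf w (zeroNk k) p /\ ipf x p q = ipf w p q.
Proof.
move=> le_pq.
have [sx <-] := ip_comp x (le0Nk p) le_pq.
have [sw <-] := ip_comp w (le0Nk p) le_pq.
move=> /(kfactor_uniq sx sw); apply; first by rewrite !kdeg_ipf0.
by rewrite !ip_deg ?le0Nk.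
Qed.

Lemma infpath_eq_diag x w :
  (forall n, ipf x (zeroNk k) (diagNk n) = ipf w (zeroNk k) (diagNk n)) -> x = w.
Proof.
move=> xw_diag.
have xw_le p q : leNk p q -> ipf x p q = ipf w p q.
  move=> le_pq.
  have [xw_q _] := ipf_prefix_eq (leNk_diag_bigmax q) (xw_diag _).
  exact: (ipf_prefix_eq le_pq xw_q).2.
apply: infpath_ext => p q; have [le_pq|nle_pq] := boolP (leNk p q); first exact: xw_le.
by rewrite !(ip_junk _ nle_pq) xw_le ?leNkxx.
Qed.

Lemma cyl_ipf0 w m :
  cyl (ipf w (zeroNk k) m) = [set x | ipf x (zeroNk k) m = ipf w (zeroNk k) m].
Proof. by rewrite /cyl kdeg_ipf0. Qed.

Lemma set1_bigcap_cyl w :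
  [set w] = \bigcap_n cyl (ipf w (zeroNk k) (diagNk n)).
Proof.
apply/seteqP; split => x /=; first by move=> -> n _; rewrite cyl_ipf0.
by move=> x_cyl; apply: infpath_eq_diag => n; have := x_cyl n I; rewrite cyl_ipf0.
Qed.

Lemma borel_inf_cyl (l : L) : borel_inf (cyl l).
Proof. exact: sub_sigma_algebra. Qed.

Lemma borel_inf_set1 w : borel_inf [set w].
Proof.
by rewrite set1_bigcap_cyl; apply: g_sigma_algebra_bigcap => n; exact: borel_inf_cyl.
Qed.

Definition cylI (s : seq L) : set (infpath L) := \big[setI/setT]_(l <- s) cyl l.

Lemma setI_closed_cylI : setI_closed (range cylI).
Proof.
by move=> _ _ [s1 _ <-] [s2 _ <-]; exists (s1 ++ s2) => //; rewrite /cylI big_cat.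
Qed.

Lemma borel_inf_cylI s : borel_inf (cylI s).
Proof.
rewrite /cylI; elim/big_ind: _ => //; first exact: g_sigma_algebra_setT.
  exact: g_sigma_algebra_setI.
by move=> l _; exact: borel_inf_cyl.
Qed.

Lemma borel_inf_sub_cylI : @borel_inf k L `<=` <<s range cylI >>.
Proof.
apply: sub_sigma_algebra2 => _ [l _ <-].
by exists [:: l] => //; rewrite /cylI big_seq1.
Qed.

End InfinitePaths.

Lemma pvm_setC (R : realType) (k : nat) (L : kgraph k) (H : hilbert R)
    (P : set (infpath L) -> H -> H) A h :
  pvm P -> borel_inf A -> P (~` A) h = h - P A h.
Proof.
move=> [_ P0 PT _ P_add] bA.
have bAC n : borel_inf (bigcup2 A (~` A) n).
  case: n => [|[|n]] /=; first exact: bA; first exact: g_sigma_algebra_setC.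
  exact: sigma_algebra0.
have tAC : trivIset setT (bigcup2 A (~` A)) by rewrite -trivIset_bigcup2 setICr.
have h_split : h = P A h + P (~` A) h.
  have := P_add _ bAC tAC h; rewrite bigcup2E setUv PT => /hcvg_unique; apply.
  apply: (@hcvg_eventually_cst _ _ _ _ 2) => n n_ge2.
  rewrite -(subnK n_ge2) addn2 !big_ord_recl /= big1 => [|i _]; last by rewrite P0.
  by rewrite addr0.
by rewrite [X in _ = X - _]h_split addrAC subrr add0r.
Qed.

Section Intertwining.
Variables (R : realType) (k : nat) (L : kgraph k) (H H' : hilbert R).
Variables (P : set (infpath L) -> H -> H) (P' : set (infpath L) -> H' -> H').
Variable U : H -> H'.
Hypothesis U_bounded : bounded_op U.

Definition intertwined_sets : set (set (infpath L)) :=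
  [set A | borel_inf A /\ forall h, P' A (U h) = U (P A h)].

Lemma dynkin_intertwined_sets : pvm P -> pvm P' -> dynkin intertwined_sets.
Proof.
move=> pvmP pvmP'; case: (pvmP) => _ _ PT _ P_add; case: (pvmP') => _ _ PT' _ P'_add.
split.
- by split=> [|h]; [exact: g_sigma_algebra_setT | rewrite PT PT'].
- move=> A [bA UA]; split=> [|h]; first exact: g_sigma_algebra_setC.
  by rewrite (pvm_setC _ pvmP) // (pvm_setC _ pvmP') // (linear_opB U_bounded.1) UA.
- move=> F tF UF; have bF n := (UF n).1.
  split; first exact: sigma_algebra_bigcup.
  move=> h; apply: (hcvg_unique (P'_add F bF tF (U h))).
  have := bounded_op_hcvg U_bounded (P_add F bF tF h); congr hcvg.
  apply/funext => n /=; rewrite (linear_op_sum U_bounded.1).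
  by apply: eq_bigr => i _; rewrite (UF i).2.
Qed.

Variables (t ts : L -> H -> H) (t' ts' : L -> H' -> H').
Hypothesis ht : forall l h, t' l (U h) = U (t l h).
Hypothesis hts : forall l h, ts' l (U h) = U (ts l h).

Lemma cylI_intertwined_sets (s : seq L) :
  pvm_of_rep t ts P -> pvm_of_rep t' ts' P' -> intertwined_sets (cylI s).
Proof.
move=> [[_ _ PT PI _] P_cyl] [[_ _ PT' PI' _] P'_cyl].
elim: s => [|l s [bs UPs]].
  by rewrite /cylI big_nil; split=> [|h]; [exact: g_sigma_algebra_setT | rewrite PT PT'].
rewrite /cylI big_cons -/(cylI s).
split; first exact: g_sigma_algebra_setI (borel_inf_cyl l) bs.
move=> h; rewrite (PI _ _ (borel_inf_cyl _) bs) (PI' _ _ (borel_inf_cyl _) bs).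
by rewrite P_cyl P'_cyl /= UPs hts ht.
Qed.

Lemma borel_intertwined_sets A :
  pvm_of_rep t ts P -> pvm_of_rep t' ts' P' -> borel_inf A ->
  forall h, P' A (U h) = U (P A h).
Proof.
move=> repP repP' /borel_inf_sub_cylI bA.
suff [] : intertwined_sets A by [].
apply: (g_sigma_algebra_sub_dynkin (@setI_closed_cylI _ L)) bA.
- exact: dynkin_intertwined_sets repP.1 repP'.1.
- by move=> _ [s _ <-]; exact: cylI_intertwined_sets.
Qed.

End Intertwining.

Lemma unitary_intertwined_nonzero (R : realType) (H H' : hilbert R) (U : H -> H')
    (S : H -> H) (S' : H' -> H') :
  unitary U -> (forall h, S' (U h) = U (S h)) -> nonzero_op S <-> nonzero_op S'.
Proof.
move=> [[U_lin _] [U_iso U_onto]] SU.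
have U_inj x : U x = 0 -> x = 0.
  by move=> Ux0; apply: hinner_eq0; rewrite -U_iso Ux0 hinner0l.
split=> nzS S0; apply: nzS; apply/funext => h.
- by apply: U_inj; rewrite -SU S0.
- by have [x <-] := U_onto h; rewrite SU S0 /= linear_op0.
Qed.

Theorem proposition3p7 (R : realType) (k : nat) (L : kgraph k)
    (H H' : hilbert R)
    (t ts : L -> H -> H) (t' ts' : L -> H' -> H')
    (P : set (infpath L) -> H -> H) (P' : set (infpath L) -> H' -> H')
    (U : H -> H') :
  (0 < k)%N ->
  row_finite L -> no_sources L ->
  CK_family t ts -> CK_family t' ts' ->
  pvm_of_rep t ts P -> pvm_of_rep t' ts' P' ->
  purely_atomic P -> purely_atomic P' ->
  bounded_op U ->
  (forall l, t' l \o U = U \o t l) ->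
  (forall l, ts' l \o U = U \o ts l) ->
  (forall w : infpath L, P' [set w] \o U = U \o P [set w]) /\
  (unitary U ->
     [set w | nonzero_op (P [set w])] = [set w | nonzero_op (P' [set w])]).
Proof.
move=> _ _ _ _ _ repP repP' _ _ U_bounded ht hts.
have intertwine_set1 w h : P' [set w] (U h) = U (P [set w] h).
  apply: (borel_intertwined_sets U_bounded _ _ repP repP' (borel_inf_set1 w)) => l y.
  - exact: (congr1 (@^~ y) (ht l)).
  - exact: (congr1 (@^~ y) (hts l)).
split=> [w|U_unitary]; first exact/funext/intertwine_set1.
apply/seteqP; split=> w /=;
  by rewrite (unitary_intertwined_nonzero U_unitary (intertwine_set1 w)).
Qed.
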